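(* Let $C\subseteq\mathbb{F}_q^n$ be a linear code and $(A,B)$ a $2$-power $t$-error locating pair for $C$. Let $\mathbf{y}=\mathbf{c}+\mathbf{e}$ with $\mathbf{c}\in C$, $\mathrm{w}(\mathbf{e})=t$, $I_{\mathbf{e}}=\mathrm{supp}(\mathbf{e})$, and $M=M_1\cap M_2$ with $M_1=\{\mathbf{a}\in A\mid \langle \mathbf{a}*\mathbf{y},\mathbf{b}\rangle=0\ \forall \mathbf{b}\in B\}$, $M_2=\{\mathbf{a}\in A\mid \langle \mathbf{a}*\mathbf{y}^2,\mathbf{v}\rangle=0\ \forall \mathbf{v}\in (B^{\perp}*C)^{\perp}\}$. The following are equivalent: (i) $M=A(I_{\mathbf{e}})$; (ii) $M(I_{\mathbf{e}})=M$; (iii) $M_{I_{\mathbf{e}}}=\{0\}$.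
   Context: All codes are $\mathbb{F}_q$-linear subspaces of $\mathbb{F}_q^n$. $\mathbf{u}*\mathbf{v}=(u_1v_1,\dots,u_nv_n)$, $\mathbf{u}^i=(u_1^i,\dots,u_n^i)$; $A*B$ is the span of all $\mathbf{a}*\mathbf{b}$; $\langle\mathbf{u},\mathbf{v}\rangle=\sum_iu_iv_i$, $X^\perp$ the dual. $\mathrm{w}$ Hamming weight, $\mathrm{d}$ minimum distance. For $J=\{j_1<\dots<j_s\}$, $\mathbf{x}_J=(x_{j_1},\dots,x_{j_s})$, $X_J=\{\mathbf{x}_J:\mathbf{x}\in X\}\subseteq\mathbb{F}_q^{|J|}$ (puncturing, keeping the coordinates in $J$), and $X(J)=\{\mathbf{x}\in X:\mathbf{x}_J=\mathbf{0}\}\subseteq\mathbb{F}_q^n$. A pair $(A,B)$ is a $2$-power $t$-error locating pair for $C$ if: (1) $A*B\subseteq C^\perp$; (2) $\dim A>t$; (3) $\mathrm{d}(A^\perp)>t$; (4) $\mathrm{d}(A)+\mathrm{d}(C)>n$; (5) $\dim B+\dim (B^\perp*C)^\perp\ge t$. *)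

From HB Require Import structures.
From mathcomp Require Import all_boot all_order all_algebra.
Set Implicit Arguments. Unset Strict Implicit. Unset Printing Implicit Defensive.
Import GRing.Theory.
Local Open Scope ring_scope.

Section Codes.
Variables (F : finFieldType) (n : nat).
Local Notation vec := 'rV[F]_n.

Definition elems (X : {vspace vec}) : seq vec := [seq x <- enum vec | x \in X].

Definition star (u v : vec) : vec := \row_i (u 0 i * v 0 i).

Definition star_code (A B : {vspace vec}) : {vspace vec} :=
  <<[seq star a b | a <- elems A, b <- elems B]>>%VS.

Definition dot (u v : vec) : F := \sum_i u 0 i * v 0 i.

(* dual code X^perp (span of all vectors orthogonal to X, which is that set) *)
Definition dual (X : {vspace vec}) : {vspace vec} :=
  <<[seq u <- enum vec | [forall x : vec, (x \in X) ==> (dot u x == 0%R)]]>>%VS.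

Definition supp (u : vec) : {set 'I_n} := [set i | u 0 i != 0].
Definition wt (u : vec) : nat := #|supp u|.

(* minimum distance; convention: the zero code has distance n+1 *)
Definition mindist (X : {vspace vec}) : nat :=
  \big[minn/n.+1]_(x : vec | (x \in X) && (x != 0%R)) wt x.

(* x_J : keep coordinates in J (in increasing order) *)
Definition punct (J : {set 'I_n}) (x : vec) : 'rV[F]_#|J| :=
  \row_(k < #|J|) x 0 (enum_val k).

Definition punctured (X : {vspace vec}) (J : {set 'I_n}) : {vspace 'rV[F]_#|J|} :=
  <<[seq punct J x | x <- elems X]>>%VS.

Definition shortened (X : {vspace vec}) (J : {set 'I_n}) : {vspace vec} :=
  <<[seq x <- elems X | punct J x == 0%R]>>%VS.

Definition is_2power_ELP (C A B : {vspace vec}) (t : nat) : Prop :=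
  [/\ (star_code A B <= dual C)%VS,
      (t < \dim A)%N,
      (t < mindist (dual A))%N,
      (n < mindist A + mindist C)%N &
      (t <= \dim B + \dim (dual (star_code (dual B) C)))%N].

Definition M1 (A B : {vspace vec}) (y : vec) : {vspace vec} :=
  <<[seq a <- elems A | [forall b : vec, (b \in B) ==> (dot (star a y) b == 0%R)]]>>%VS.

Definition M2 (C A B : {vspace vec}) (y : vec) : {vspace vec} :=
  <<[seq a <- elems A | [forall v : vec,
       (v \in dual (star_code (dual B) C)) ==> (dot (star a (star y y)) v == 0%R)]]>>%VS.

End Codes.

(* Every a in A vanishing on supp e satisfies a * y = a * c and
   a * y^2 = (a * c) * c; since <a * c, b> = <c, a * b> = 0 for b in B,
   a * c lies in B^perp, so a lies in M1 and in M2.  Hence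
   A(Ie) <= M <= A, and all three conditions say that M <= A(Ie). *)
From mathcomp Require Import all_boot all_order all_algebra.
Set Implicit Arguments. Unset Strict Implicit. Unset Printing Implicit Defensive.
Import GRing.Theory.
Local Open Scope ring_scope.

Lemma span_additive_eq0 (K : fieldType) (V : vectType K) (W : lmodType K)
    (f : V -> W) (s : seq V) :
  (forall k u v, f (k *: u + v) = k *: f u + f v) ->
  {in s, forall u, f u = 0} -> {in <<s>>%VS, forall v, f v = 0}.
Proof.
move=> f_lin f_s v /(@coord_span _ _ _ (in_tuple s)) ->.
have f0 : f 0 = 0.
  by have := f_lin (-1) 0 0; rewrite scaler0 addr0 scaleN1r addNr.
elim/big_rec: _ => [//|i x _ fx0].
by rewrite f_lin fx0 f_s ?scaler0 ?addr0 // mem_nth.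
Qed.

Section Codes.
Variables (F : finFieldType) (n : nat).
Local Notation vec := 'rV[F]_n.
Implicit Types (X Y A B C : {vspace vec}) (J : {set 'I_n}).

Lemma mem_elems X x : (x \in elems X) = (x \in X).
Proof. by rewrite mem_filter mem_enum andbT. Qed.

Lemma span_filter_elems_sub X (P : pred vec) :
  (<<[seq x <- elems X | P x]>> <= X)%VS.
Proof. by apply/span_subvP => x; rewrite mem_filter mem_elems => /andP[]. Qed.

Lemma memv_span_filter_elems X (P : pred vec) x :
  x \in X -> P x -> x \in <<[seq x <- elems X | P x]>>%VS.
Proof. by move=> Xx Px; apply: memv_span; rewrite mem_filter mem_elems Xx Px. Qed.

Lemma dotC (u v : vec) : dot u v = dot v u.
Proof. by rewrite /dot; apply: eq_bigr => i _; rewrite mulrC. Qed.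

Lemma dotZDl (x : vec) k (u v : vec) :
  dot (k *: u + v) x = k * dot u x + dot v x.
Proof.
rewrite /dot mulr_sumr -big_split; apply: eq_bigr => i _.
by rewrite !mxE mulrDl mulrA.
Qed.

Lemma dot_star (u v w : vec) : dot (star u v) w = dot v (star u w).
Proof. by rewrite /dot; apply: eq_bigr => i _; rewrite !mxE mulrCA mulrA. Qed.

Lemma starA (u v w : vec) : star u (star v w) = star (star u v) w.
Proof. by apply/rowP => i; rewrite !mxE mulrA. Qed.

Lemma starDr (u v w : vec) : star u (v + w) = star u v + star u w.
Proof. by apply/rowP => i; rewrite !mxE mulrDr. Qed.

Lemma star_eq0_supp (u e : vec) :
  {in supp e, forall i, u 0 i = 0} -> star u e = 0.
Proof.
move=> u0; apply/rowP => i; rewrite !mxE.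
have [/u0 ->|] := boolP (i \in supp e); first by rewrite mul0r.
by rewrite inE negbK => /eqP ->; rewrite mulr0.
Qed.

Lemma mem_star_code A B a b : a \in A -> b \in B -> star a b \in star_code A B.
Proof. by move=> Aa Bb; apply/memv_span/allpairs_f; rewrite mem_elems. Qed.

Lemma dual_orthogonal X u x : u \in dual X -> x \in X -> dot u x = 0.
Proof.
move=> Xu Xx.
apply: (@span_additive_eq0 _ _ F^o (fun v => dot v x) _ _ _ u Xu) => [k a b|w].
  exact: dotZDl.
by rewrite mem_filter => /andP[/forallP/(_ x)/implyP/(_ Xx)/eqP].
Qed.

Lemma memv_dual X u : {in X, forall x, dot u x = 0} -> u \in dual X.
Proof.
move=> uX; apply: memv_span; rewrite mem_filter mem_enum andbT.
by apply/forall_inP => x /uX ->.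
Qed.

Lemma star_mem_dual C A B a c :
  (star_code A B <= dual C)%VS -> a \in A -> c \in C -> star a c \in dual B.
Proof.
move=> ABC Aa Cc; apply: memv_dual => b Bb.
by rewrite dot_star dotC (dual_orthogonal (subvP ABC _ (mem_star_code Aa Bb))).
Qed.

Lemma punct_eq0P J (x : vec) : punct J x = 0 <-> {in J, forall j, x 0 j = 0}.
Proof.
split=> [/rowP x0 j Jj|x0]; last by apply/rowP => k; rewrite !mxE x0 ?enum_valP.
by have := x0 (enum_rank_in Jj j); rewrite !mxE enum_rankK_in.
Qed.

Lemma mem_shortened X J x :
  (x \in shortened X J) = (x \in X) && (punct J x == 0).
Proof.
apply/idP/andP => [Xx|[Xx x0]]; last exact: memv_span_filter_elems.
split; first exact: subvP (span_filter_elems_sub _ _) _ Xx.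
apply/eqP; apply: (span_additive_eq0 (f := punct J) _ _ Xx) => [k u v|w].
  by apply/rowP => i; rewrite !mxE.
by rewrite mem_filter => /andP[/eqP].
Qed.

Lemma shortened_sub X J : (shortened X J <= X)%VS.
Proof. exact: span_filter_elems_sub. Qed.

Lemma shortenedS X Y J : (X <= Y)%VS -> (shortened X J <= shortened Y J)%VS.
Proof.
move=> XY; apply/subvP => x; rewrite !mem_shortened => /andP[Xx ->].
by rewrite (subvP XY).
Qed.

Lemma shortened_id X J : shortened (shortened X J) J = shortened X J.
Proof.
by apply/vspaceP => x; rewrite !mem_shortened -andbA andbb.
Qed.

Lemma shortened_eq_sandwich A X J :
  (shortened A J <= X <= A)%VS -> (X = shortened A J <-> shortened X J = X).
Proof.
case/andP=> SX XA; split=> [->|XJ]; first exact: shortened_id.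
by apply/eqP; rewrite eqEsubv SX andbT -{1}XJ shortenedS.
Qed.

Lemma punctured_eq0P X J :
  punctured X J = 0%VS <-> {in X, forall x, punct J x = 0}.
Proof.
split=> [X0 x Xx|X0].
  by apply/eqP; rewrite -memv0 -X0 memv_span // map_f ?mem_elems.
apply/eqP; rewrite -subv0; apply/span_subvP => _ /mapP[x + ->].
by rewrite mem_elems => /X0 ->; rewrite memv0.
Qed.

Lemma shortened_eq_punctured0 X J :
  shortened X J = X <-> punctured X J = 0%VS.
Proof.
split=> [XJ|/punctured_eq0P X0].
  by apply/punctured_eq0P => x; rewrite -XJ mem_shortened => /andP[_ /eqP].
apply/eqP; rewrite eqEsubv shortened_sub; apply/subvP => x Xx.
by rewrite mem_shortened Xx (X0 x Xx) eqxx.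
Qed.

Lemma M1_M2_sub C A B y : (M1 A B y :&: M2 C A B y <= A)%VS.
Proof. exact: subv_trans (capvSl _ _) (span_filter_elems_sub _ _). Qed.

Lemma shortened_supp_sub_M1_M2 C A B c e :
  (star_code A B <= dual C)%VS -> c \in C ->
  (shortened A (supp e) <= M1 A B (c + e) :&: M2 C A B (c + e))%VS.
Proof.
move=> ABC Cc; apply/subvP => a.
rewrite mem_shortened => /andP[Aa /eqP/punct_eq0P a0].
have ae : star a e = 0 by apply: star_eq0_supp.
have ay : star a (c + e) = star a c by rewrite starDr ae addr0.
have ayy : star a (star (c + e) (c + e)) = star (star a c) c.
  have ace : star (star a c) e = 0.
    by apply: star_eq0_supp => i /a0 ai; rewrite mxE ai mul0r.
  by rewrite starA ay starDr ace addr0.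
have acB := star_mem_dual ABC Aa Cc.
rewrite memv_cap; apply/andP; split; apply: memv_span_filter_elems => //;
  apply/forall_inP => v Vv; apply/eqP.
  by rewrite ay (dual_orthogonal acB Vv).
by rewrite ayy dotC (dual_orthogonal Vv) ?mem_star_code.
Qed.

End Codes.

Theorem lemma3p7 (F : finFieldType) (n t : nat) (C A B : {vspace 'rV[F]_n})
  (c e : 'rV[F]_n) :
  is_2power_ELP C A B t -> c \in C -> wt e = t ->
  let y := c + e in
  let Ie := supp e in
  let M := (M1 A B y :&: M2 C A B y)%VS in
  (M = shortened A Ie <-> shortened M Ie = M) /\
  (shortened M Ie = M <-> punctured M Ie = 0%VS).
Proof.
move=> [ABC _ _ _ _] Cc _ y Ie M.
split; last exact: shortened_eq_punctured0.
apply: shortened_eq_sandwich.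
by rewrite shortened_supp_sub_M1_M2 ?M1_M2_sub.
Qed.
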